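(* Let $n\ge2$, $\kappa\ge1$ and $G\in\mathcal G_{[n;\kappa]}$ with payoff structure vectors $V_1^c,\dots,V_n^c$. Then $G$ is skew-symmetric if and only if $$V_i^c=\mathrm{sgn}(\sigma)\,V_{\sigma(i)}^c\,T_\sigma\quad\text{for all }\sigma\in\mathbf S_n\text{ and }i=1,\dots,n,$$ where $T_\sigma=\Phi_{\sigma^{-1}(1)}*\Phi_{\sigma^{-1}(2)}*\cdots*\Phi_{\sigma^{-1}(n)}$.
   Context: $\delta_\kappa^j$ is the $j$-th column of $I_\kappa$, $\mathbf 1_m$ is the all-ones column vector of length $m$. For $i=1,\dots,n$ let $\Phi_i=\mathbf 1_{\kappa^{i-1}}^T\otimes I_\kappa\otimes\mathbf 1_{\kappa^{n-i}}^T\in\mathbb R^{\kappa\times\kappa^n}$, so that $\Phi_i(x_1\otimes\cdots\otimes x_n)=x_i$ for $x_j\in\{\delta_\kappa^1,\dots,\delta_\kappa^\kappa\}$. The Khatri–Rao product of $A\in\mathbb R^{p\times m}$ and $B\in\mathbb R^{q\times m}$ is $A*B=[\mathrm{Col}_1(A)\otimes\mathrm{Col}_1(B),\dots,\mathrm{Col}_m(A)\otimes\mathrm{Col}_m(B)]\in\mathbb R^{pq\times m}$ (iterated left to right). A finite game $G\in\mathcal G_{[n;\kappa]}$ has players $\{1,\dots,n\}$, each with strategy set $\{1,\dots,\kappa\}$, strategy $j$ identified with $\delta_\kappa^j$, and payoffs $c_i$; $V_i^c\in\mathbb R^{\kappa^n}$ is the unique row vector with $c_i(x_1,\dots,x_n)=V_i^c(x_1\otimes\cdots\otimes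 x_n)$ for all $x_j\in\{\delta_\kappa^1,\dots,\delta_\kappa^\kappa\}$. $\mathbf S_n$ is the symmetric group. $G$ is skew-symmetric if for every $\sigma\in\mathbf S_n$, every $i$ and every profile, $c_i(x_1,\dots,x_n)=\mathrm{sgn}(\sigma)\,c_{\sigma(i)}(x_{\sigma^{-1}(1)},\dots,x_{\sigma^{-1}(n)})$. *)

From HB Require Import structures.
From mathcomp Require Import all_boot all_order all_algebra all_fingroup.
From mathcomp Require Import mxtens.
Set Implicit Arguments. Unset Strict Implicit. Unset Printing Implicit Defensive.
Import Order.TTheory GRing.Theory Num.Theory.
Local Open Scope ring_scope.

(* Kronecker product: mathcomp-real-closed's [tensmx] (A *t B), the standard
   Kronecker product: (A *t B) (i1*p + i2) (j1*q + j2) = A i1 j1 * B i2 j2. *)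

Section Defs.
Variable R : comPzRingType.

(* delta_k^j : the j-th column of I_k (strategies are 0-based: j : 'I_k). *)
Definition delta (k : nat) (j : 'I_k) : 'cV[R]_k := col j (1%:M : 'M[R]_k).

Definition ones (m : nat) : 'cV[R]_m := const_mx 1.

Definition khatri_rao (p q m : nat) (A : 'M[R]_(p, m)) (B : 'M[R]_(q, m))
  : 'M[R]_(p * q, m) :=
  \matrix_(r, j) (col j A *t col j B) r 0.

Fixpoint khatri_rao_iter (k m n : nat) : ('I_n -> 'M[R]_(k, m)) -> 'M[R]_(k ^ n, m) :=
  match n return ('I_n -> 'M[R]_(k, m)) -> 'M[R]_(k ^ n, m) with
  | 0 => fun _ => const_mx 1
  | n'.+1 => fun A =>
      castmx (esym (expnSr k n'), erefl m)
        (khatri_rao (khatri_rao_iter (fun i => A (widen_ord (leqnSn n') i))) (A ord_max))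
  end.

Fixpoint kron_iter (k n : nat) : ('I_n -> 'cV[R]_k) -> 'cV[R]_(k ^ n) :=
  match n return ('I_n -> 'cV[R]_k) -> 'cV[R]_(k ^ n) with
  | 0 => fun _ => const_mx 1
  | n'.+1 => fun x =>
      castmx (esym (expnSr k n'), muln1 1)
        (kron_iter (fun i => x (widen_ord (leqnSn n') i)) *t x ord_max)
  end.

Lemma Phi_dim_proof (k n : nat) (i : 'I_n) : (k ^ i * k * k ^ (n - i.+1) = k ^ n)%N.
Proof. by rewrite -expnSr -expnD subnKC. Qed.

(* Phi_i = 1_{k^(i)}^T (x) I_k (x) 1_{k^(n-1-i)}^T  (0-based index i : 'I_n,
   i.e. Phi_i here is Phi_{i+1} of the paper), a k x k^n matrix. *)
Definition Phi (k n : nat) (i : 'I_n) : 'M[R]_(k, k ^ n) :=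
  castmx (etrans (muln1 _) (mul1n k), Phi_dim_proof k i)
    (((ones (k ^ i))^T *t (1%:M : 'M[R]_k)) *t (ones (k ^ (n - i.+1)))^T).

Definition Tsigma (k n : nat) (s : 'S_n) : 'M[R]_(k ^ n, k ^ n) :=
  khatri_rao_iter (fun j : 'I_n => Phi k (s^-1%g j)).

Definition sgn (n : nat) (s : 'S_n) : R := (-1) ^+ odd_perm s.

(* A game in G_[n;k]: payoffs c i x, for player i and strategy profile
   x : 'I_n -> 'I_k (strategy j of a player identified with delta_k^j). *)
Definition profile_vec (k n : nat) (x : 'I_n -> 'I_k) : 'cV[R]_(k ^ n) :=
  kron_iter (fun j => delta (x j)).

Definition is_payoff_structure (k n : nat) (c : 'I_n -> ('I_n -> 'I_k) -> R)
  (V : 'I_n -> 'rV[R]_(k ^ n)) : Prop :=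
  forall (i : 'I_n) (x : 'I_n -> 'I_k), c i x = (V i *m profile_vec x) 0 0.

Definition skew_symmetric (k n : nat) (c : 'I_n -> ('I_n -> 'I_k) -> R) : Prop :=
  forall (s : 'S_n) (i : 'I_n) (x : 'I_n -> 'I_k),
    c i x = sgn s * c (s i) (fun j => x (s^-1%g j)).

End Defs.

From HB Require Import structures.
From mathcomp Require Import all_boot all_order all_algebra all_fingroup.
From mathcomp Require Import mxtens.
Set Implicit Arguments. Unset Strict Implicit. Unset Printing Implicit Defensive.
Import Order.TTheory GRing.Theory Num.Theory.

(* Index r of a vector of length k^n is read as the n-digit base-k numeral of
   its digits; strategy profiles x are exactly the digit strings.  The
   Kronecker product of the delta_k^(x j) is the standard basis vector whose
   index has digits x, and column r of T_sigma is the Kronecker product of the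
   delta's at the digits of r permuted by sigma^-1.  So entry r of V_i is
   c_i at the digits of r, entry r of V_(sigma i) T_sigma is c_(sigma i) at the
   permuted digits, and the matrix identity is skew-symmetry read at every
   profile. *)

(* Digit j of r in base K.+1, with j = 0 the most significant of n digits,
   matching the left-to-right order of the iterated Kronecker product. *)
Definition digit (K n : nat) (j : 'I_n) (r : nat) : 'I_K.+1 :=
  Ordinal (ltn_pmod (r %/ K.+1 ^ (n - j.+1)) (ltn0Sn K)).

Lemma digit_widen K n (j : 'I_n) r :
  digit K (widen_ord (leqnSn n) j) r = digit K j (r %/ K.+1).
Proof. by apply: val_inj; rewrite /= -divnMA -expnS subSS subnSK. Qed.

Lemma digit_max K n r : val (digit K (@ord_max n) r) = (r %% K.+1)%N.
Proof. by rewrite /= subnn expn0 divn1. Qed.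

Lemma digit_inj K n (r r' : nat) : (r < K.+1 ^ n)%N -> (r' < K.+1 ^ n)%N ->
  (forall j : 'I_n, digit K j r = digit K j r') -> r = r'.
Proof.
elim: n r r' => [|n IHn] r r'; first by rewrite !ltnS !leqn0 => /eqP-> /eqP->.
rewrite expnSr -!ltn_divLR // => lt_r lt_r' eq_rr'.
rewrite (divn_eq r K.+1) (divn_eq r' K.+1).
rewrite -(digit_max K n r) -(digit_max K n r') eq_rr'.
by congr (_ * _ + _)%N; apply: IHn => // j; rewrite -!digit_widen.
Qed.

Lemma digit_surj K n (x : 'I_n -> 'I_K.+1) :
  exists r : 'I_(K.+1 ^ n), forall j, digit K j r = x j.
Proof.
elim: n x => [|n IHn] x; first by exists ord0 => -[].
have [r xr] := IHn (fun j => x (widen_ord (leqnSn n) j)).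
have lt_r : (r * K.+1 + x ord_max < K.+1 ^ n.+1)%N.
  by rewrite expnSr; exact: (@mxtens_index_proof _ _ (r, x ord_max)).
exists (Ordinal lt_r) => j; have [lt_jn | le_nj] := ltnP j n.
  have -> : j = widen_ord (leqnSn n) (Ordinal lt_jn) by apply: val_inj.
  by rewrite digit_widen /= divnMDl // divn_small // addn0 xr.
have -> : j = ord_max by apply/val_inj/eqP; rewrite eqn_leq le_nj -ltnS ltn_ord.
by apply: val_inj; rewrite digit_max /= modnMDl modn_small.
Qed.

Local Open Scope ring_scope.

Section Entries.
Variable R : comPzRingType.

Lemma prodr_bool (I : finType) (b : pred I) :
  \prod_(i : I) (b i)%:R = [forall i, b i]%:R :> R.
Proof.
have [/forallP b_all | /forallPn [i not_bi]] := boolP [forall i, b i].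
  by rewrite big1 // => i _; rewrite b_all.
by rewrite (bigD1 i) //= (negbTE not_bi) mul0r.
Qed.

Lemma mulmx_col p N M (A : 'M[R]_(p, N)) (B : 'M[R]_(N, M)) (m : 'I_M) :
  A *m col m B = col m (A *m B).
Proof. by rewrite !colE mulmxA. Qed.

Lemma mulmx_delta p N (A : 'M[R]_(p, N)) (m : 'I_N) :
  A *m delta R m = col m A.
Proof. by rewrite /delta mulmx_col mulmx1. Qed.

Lemma kron_iterE K n (x : 'I_n -> 'cV[R]_K.+1) (r : 'I_(K.+1 ^ n)) (z : 'I_1) :
  kron_iter x r z = \prod_(j < n) x j (digit K j r) 0.
Proof.
elim: n x r z => [|n IHn] x r z; first by rewrite big_ord0 mxE.
rewrite /= castmxE (mxE _ _ (cast_ord _ r)) big_ord_recr /= IHn.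
congr (_ * _); first by apply: eq_bigr => j _; rewrite digit_widen.
by congr (x _ _ _); apply: val_inj; rewrite ?digit_max /= ?modn1.
Qed.

Lemma khatri_rao_iterE K n m (A : 'I_n -> 'M[R]_(K.+1, m))
    (r : 'I_(K.+1 ^ n)) (l : 'I_m) :
  khatri_rao_iter A r l = \prod_(j < n) A j (digit K j r) l.
Proof.
elim: n A r l => [|n IHn] A r l; first by rewrite big_ord0 mxE.
rewrite /= castmxE /khatri_rao (mxE _ _ (cast_ord _ r)) !mxE cast_ord_id.
rewrite big_ord_recr /= IHn.
congr (_ * _); first by apply: eq_bigr => j _; rewrite digit_widen.
by congr (A _ _ _); apply: val_inj; rewrite ?digit_max /= ?modn1.
Qed.

Lemma PhiE K n (i : 'I_n) (a : 'I_K.+1) (r : 'I_(K.+1 ^ n)) :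
  Phi R K.+1 i a r = (a == digit K i r)%:R.
Proof.
rewrite /Phi castmxE (mxE _ _ (cast_ord _ a)) !mxE mulr1 mul1r.
congr (_ %:R); rewrite -!val_eqE /=.
by rewrite divn1 (modn_small (ltn_ord a)).
Qed.

Lemma profile_vecE K n (x : 'I_n -> 'I_K.+1) r z :
  profile_vec R x r z = \prod_j (digit K j r == x j)%:R.
Proof. by rewrite kron_iterE; apply: eq_bigr => j _; rewrite !mxE. Qed.

Lemma eq_profile_vec K n (x y : 'I_n -> 'I_K.+1) :
  x =1 y -> profile_vec R x = profile_vec R y.
Proof.
by move=> eq_xy; apply/matrixP => r z; rewrite !profile_vecE; under eq_bigr do rewrite eq_xy.
Qed.

Lemma profile_vec_digit K n (m : 'I_(K.+1 ^ n)) :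
  profile_vec R (fun j => digit K j m) = delta R m.
Proof.
apply/matrixP => r z; rewrite profile_vecE prodr_bool !mxE; congr ((nat_of_bool _)%:R).
apply/idP/idP => [/forallP eq_digits | /eqP->]; last exact/forallP.
by apply/eqP/val_inj; apply: digit_inj (ltn_ord r) (ltn_ord m) _ => j; apply/eqP.
Qed.

Lemma col_Tsigma K n (s : 'S_n) (m : 'I_(K.+1 ^ n)) :
  col m (Tsigma R K.+1 s) = profile_vec R (fun j => digit K (s^-1%g j) m).
Proof.
apply/matrixP => r z; rewrite mxE khatri_rao_iterE profile_vecE.
by apply: eq_bigr => j _; rewrite PhiE eq_sym.
Qed.

End Entries.

Section PayoffStructure.
Variables (R : comPzRingType) (K n : nat).
Variables (c : 'I_n -> ('I_n -> 'I_K.+1) -> R) (V : 'I_n -> 'rV[R]_(K.+1 ^ n)).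
Hypothesis hV : is_payoff_structure c V.

Lemma eq_payoff i (x y : 'I_n -> 'I_K.+1) : x =1 y -> c i x = c i y.
Proof. by move=> eq_xy; rewrite !hV (eq_profile_vec R eq_xy). Qed.

Lemma payoff_digit i (m : 'I_(K.+1 ^ n)) : c i (fun j => digit K j m) = V i 0 m.
Proof. by rewrite hV profile_vec_digit mulmx_delta mxE. Qed.

Lemma payoff_digit_perm (s : 'S_n) i (m : 'I_(K.+1 ^ n)) :
  c i (fun j => digit K (s^-1%g j) m) = (V i *m Tsigma R K.+1 s) 0 m.
Proof. by rewrite hV -col_Tsigma mulmx_col mxE. Qed.

End PayoffStructure.

Theorem proposition3p15 (R : realFieldType) (n k : nat)
  (hn : (2 <= n)%N) (hk : (1 <= k)%N)
  (c : 'I_n -> ('I_n -> 'I_k) -> R) (V : 'I_n -> 'rV[R]_(k ^ n))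
  (hV : is_payoff_structure c V) :
  skew_symmetric c <->
  (forall (s : 'S_n) (i : 'I_n), V i = sgn R s *: (V (s i) *m Tsigma R k s)).
Proof.
case: k hk c V hV => [// | K] _ c V hV.
split=> [skew s i | eqV s i x].
  apply/rowP => m; rewrite mxE -(payoff_digit hV) -(payoff_digit_perm hV).
  exact: skew.
have [m xm] := digit_surj x.
rewrite (eq_payoff hV i (fun j => esym (xm j))).
rewrite (eq_payoff hV (s i) (fun j => esym (xm (s^-1%g j)))).
by rewrite (payoff_digit hV) (payoff_digit_perm hV) (eqV s i) mxE.
Qed.
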